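(* Assume the setting in the context with $\epsilon \in (0,1)$, $\delta = \bigl(1 + \frac{k+3}{2\epsilon}\bigr)^{-1}$, $S_{\mathrm{init}} = \{e^*\}$ where $e^* \in \arg\max_{e \in \mathcal{G}} f(\{e\})$, and $\alpha = f(S_{\mathrm{init}})\,\delta / n$ (assume $f(S_{\mathrm{init}}) > 0$). Let $S \in \mathcal{I}$ be locally optimal, i.e. $\sum_{a \in A} w_{(A,B)}(a)^2 \le \sum_{b \in B} w(b)^2$ for every $k$-replacement $(A,B)$ for $S$ (for an arbitrary total order $\prec$ used to define the weights), and let $O \in \arg\max_{X \in \mathcal{I}} f(X)$. Then \[ \Bigl(\frac{k+3}{2} + \epsilon\Bigr) f(S) \;\ge\; f(O). \]
   Context: Setting. $\mathcal{G}$ is a finite ground set with $|\mathcal{G}| = n$, and $f : 2^{\mathcal{G}} \to \mathbb{R}_{\ge 0}$ is a nonnegative monotone submodular function. $\mathcal{I} \subseteq 2^{\mathcal{G}}$ is a nonempty downward-closed family that is a $k$-exchange system ($k \ge 1$): for all $A, B \in \mathcal{I}$ there is a collection $\{Y_e \subseteq B \setminus A : e \in A \setminus B\}$ such that (K1) $|Y_e| \le k$ for each $e$; (K2) every $x \in B \setminus A$ lies in at most $k$ of the sets $Y_e$; (K3) for every $C \subseteq A \setminus B$, $(B \setminus \bigcup_{e \in C} Y_e) \cup C \in \mathcal{I}$. It is assumed that every singleton $\{e\}$, $e\in\mathcal{G}$, is in $\mathcal{I}$. Weights. Given $\alpha > 0$ and a total order $\prec$ on $\mathcal{G}$: for $S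 \in \mathcal{I}$ with elements $s_1 \prec \dots \prec s_m$ and $S_i = \{s_1,\dots,s_i\}$, define $w(s_i) = \lfloor (f(S_{i-1} \cup \{s_i\}) - f(S_{i-1}))/\alpha \rfloor \alpha$. A $k$-replacement for $S$ is a pair $(A,B)$ with $B \subseteq S$, $A \subseteq \mathcal{G} \setminus (S \setminus B)$, $|A| \le k$, $|B| \le k^2 - k + 1$, and $(S \setminus B) \cup A \in \mathcal{I}$. For such a pair, write $A = \{a_1 \prec \dots \prec a_r\}$, $A_i = \{a_1,\dots,a_i\}$, and define $w_{(A,B)}(a_i) = \lfloor (f((S\setminus B) \cup A_{i-1} \cup \{a_i\}) - f((S\setminus B)\cup A_{i-1}))/\alpha \rfloor \alpha$. *)

(* Reals are abstracted as an arbitrary archimedean field R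
   (needed for floor); the real numbers are an instance of this. *)
From HB Require Import structures.
From mathcomp Require Import all_boot all_order all_algebra.
Set Implicit Arguments. Unset Strict Implicit. Unset Printing Implicit Defensive.
Import Order.TTheory GRing.Theory Num.Theory.
Local Open Scope ring_scope.

Section Defs.
Variables (R : archiRealFieldType) (G : finType).

Definition nonneg_fun (f : {set G} -> R) := forall A, 0 <= f A.
Definition monotone_fun (f : {set G} -> R) :=
  forall A B : {set G}, A \subset B -> f A <= f B.
Definition submodular_fun (f : {set G} -> R) :=
  forall A B : {set G}, f (A :|: B) + f (A :&: B) <= f A + f B.

Definition down_closed (I : pred {set G}) :=
  forall A B : {set G}, B \subset A -> I A -> I B.

Definition k_exchange (k : nat) (I : pred {set G}) :=
  forall A B : {set G}, I A -> I B ->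
  exists Y : G -> {set G},
    [/\ (forall e, e \in A :\: B -> Y e \subset B :\: A),
        (forall e, e \in A :\: B -> (#|Y e| <= k)%N),
        (forall x, x \in B :\: A -> (#|[set e in A :\: B | x \in Y e]| <= k)%N) &
        (forall C : {set G}, C \subset A :\: B ->
            I ((B :\: \bigcup_(e in C) Y e) :|: C))].

Definition strict_total_order (lt : rel G) :=
  [/\ irreflexive lt, transitive lt & forall x y, x != y -> lt x y || lt y x].

Definition pre (lt : rel G) (X : {set G}) (s : G) : {set G} :=
  [set x in X | lt x s].

Definition rnd (alpha t : R) : R := (Num.floor (t / alpha))%:~R * alpha.

Definition weight (f : {set G} -> R) (alpha : R) (lt : rel G) (S : {set G}) (s : G) : R :=
  rnd alpha (f (pre lt S s :|: [set s]) - f (pre lt S s)).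

Definition weight_repl (f : {set G} -> R) (alpha : R) (lt : rel G)
    (S A B : {set G}) (a : G) : R :=
  rnd alpha (f ((S :\: B) :|: pre lt A a :|: [set a]) - f ((S :\: B) :|: pre lt A a)).

Definition k_replacement (k : nat) (I : pred {set G}) (S A B : {set G}) :=
  [/\ B \subset S, [disjoint A & S :\: B], (#|A| <= k)%N,
      (#|B| <= k ^ 2 - k + 1)%N & I ((S :\: B) :|: A)].

Definition locally_optimal (k : nat) (I : pred {set G}) (f : {set G} -> R)
    (alpha : R) (lt : rel G) (S : {set G}) :=
  forall A B : {set G}, k_replacement k I S A B ->
    \sum_(a in A) (weight_repl f alpha lt S A B a) ^+ 2
      <= \sum_(b in B) (weight f alpha lt S b) ^+ 2.

End Defs.

(* Write w for the rounded marginal weights of S and O' = O \ S, S' = S \ O.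
   1. Rounding and submodularity: the weights of S sum to at most f S, and
      f (S u O') - f S is at most the sum over O' of the rounded marginals
      u o of o on top of S and the earlier elements of O', plus |O'| alpha.
   2. Charging: the exchange sets Y o (o in O') of the k-exchange property
      from O to S are grouped by the heaviest element of Y o.  Each group is
      a k-replacement for S, so local optimality bounds its squared gains;
      the "star inequality" turns this into 2 sum u <= w x + sum sum w, and
      summing over groups with the degree bound (K2) gives
      2 sum_{O'} u <= (k+1) sum_{S'} w <= (k+1) f S.
   3. With alpha = f {e*} delta / n the rounding loss is at most delta f O,
      and the choice of delta absorbs that slack into the eps term. *)

From HB Require Import structures.
From mathcomp Require Import all_boot all_order all_algebra.
From mathcomp Require Import ring lra zify.
Import Order.TTheory GRing.Theory Num.Theory.
Local Open Scope ring_scope.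
Set Implicit Arguments. Unset Strict Implicit.

Section Rounding.
Variables (R : archiRealFieldType) (alpha : R).
Hypothesis alpha_gt0 : 0 < alpha.

Lemma rnd_le t : rnd alpha t <= t.
Proof. by rewrite /rnd -ler_pdivlMr // floor_le. Qed.

Lemma rnd_ge t : t - alpha <= rnd alpha t.
Proof.
have := floorD1_gt (t / alpha).
by rewrite /rnd lerBlDr ltr_pdivrMr // intrD mulrDl mul1r => /ltW.
Qed.

Lemma rnd_ge0 t : 0 <= t -> 0 <= rnd alpha t.
Proof.
move=> t_ge0; rewrite /rnd mulr_ge0 ?(ltW alpha_gt0) //.
by rewrite ler0z floor_ge0 divr_ge0 // ltW.
Qed.

Lemma rnd_mono s t : s <= t -> rnd alpha s <= rnd alpha t.
Proof. by move=> st; rewrite /rnd ler_pM2r // ler_int le_floor // ler_pM2r // invr_gt0. Qed.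

End Rounding.

Section Submodularity.
Variables (R : archiRealFieldType) (G : finType) (f : {set G} -> R).
Hypotheses (f_mono : monotone_fun f) (f_sub : submodular_fun f).

Lemma marginal_ge0 (X : {set G}) a : 0 <= f (X :|: [set a]) - f X.
Proof. by rewrite subr_ge0 f_mono // subsetUl. Qed.

Lemma marginal_antitone (X Y : {set G}) a : X \subset Y ->
  f (Y :|: [set a]) - f Y <= f (X :|: [set a]) - f X.
Proof.
move=> XY; have [aY|aY] := boolP (a \in Y).
  have -> : Y :|: [set a] = Y by apply/setUidPl; rewrite sub1set.
  by rewrite subrr marginal_ge0.
have XaY : X :|: [set a] :|: Y = Y :|: [set a] by rewrite setUAC (setUidPr XY).
have XaIY : (X :|: [set a]) :&: Y = X.
  by rewrite setIUl (setIidPl XY) (disjoint_setI0 _) ?setU0 // disjoints1.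
have := f_sub (X :|: [set a]) Y; rewrite XaY XaIY => h; lra.
Qed.

End Submodularity.

Section TotalOrderChains.
Variables (G : finType) (lt : rel G).
Hypothesis lt_order : strict_total_order lt.

(* Every nonempty set has an lt-largest element; it is the one with the
   largest set of predecessors. *)
Lemma exists_last (T : {set G}) : T != set0 ->
  exists2 m, m \in T & forall y, y \in T -> y != m -> lt y m.
Proof.
have [irr tr tot] := lt_order; case/set0Pn => x0 x0T.
have [m mT mmax] := arg_maxnP (fun y => #|pre lt T y|) x0T.
have {}mT : m \in T := mT.
exists m => // y yT ym; case/orP: (tot y m ym) => // lt_my.
suff : (#|pre lt T m| < #|pre lt T y|)%N by move=> /leq_trans/(_ (mmax y yT)); rewrite ltnn.
apply: proper_card; apply/properP; split.
  by apply/subsetP => z; rewrite !inE => /andP[-> /tr ->].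
by exists m; rewrite !inE mT ?lt_my ?irr.
Qed.

Lemma telescope_pre (R : zmodType) (h : {set G} -> R) (T : {set G}) :
  \sum_(x in T) (h (pre lt T x :|: [set x]) - h (pre lt T x)) = h T - h set0.
Proof.
have [irr tr _] := lt_order.
have [n] := ubnP #|T|; elim: n T => // n IH T card_T.
have [->|T_n0] := eqVneq T set0; first by rewrite big_set0 subrr.
have [m mT m_last] := exists_last T_n0.
have pre_m : pre lt T m = T :\ m.
  apply/setP => y; rewrite !inE; have [->|ym] /= := eqVneq y m; first by rewrite irr andbF.
  by apply: andb_idr => /m_last; apply.
have pre_other i : i \in T :\ m -> pre lt T i = pre lt (T :\ m) i.
  rewrite !inE => /andP[im iT]; apply/setP => y; rewrite !inE.
  have [->|] //= := eqVneq y m; apply/negbTE/negP => /andP[_ lt_mi].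
  by move: (irr i); rewrite (tr _ _ _ (m_last i iT im) lt_mi).
rewrite (big_setD1 m mT) /= pre_m setUC setD1K //.
rewrite (eq_bigr _ (fun i hi => congr1 (fun P => h (P :|: _) - h P) (pre_other i hi))).
rewrite IH; last by rewrite (cardsD1 m T) mT in card_T.
by rewrite addrA subrK.
Qed.

End TotalOrderChains.

Section FiniteSums.
Variables (R : archiRealFieldType) (G : finType).

Lemma sum_bigcup_count (A : {set G}) (Y : G -> {set G}) (g : G -> R) :
  \sum_(o in A) \sum_(b in Y o) g b = \sum_b g b *+ #|[set o in A | b \in Y o]|.
Proof.
under eq_bigr do rewrite big_mkcond /=.
rewrite exchange_big /=; apply: eq_bigr => b _.
by rewrite -big_mkcondr -sumr_const; apply: eq_bigl => o; rewrite inE.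
Qed.

Lemma card_bigcup_le (A : {set G}) (Y : G -> {set G}) :
  (#|\bigcup_(o in A) Y o| <= \sum_(o in A) #|Y o|)%N.
Proof.
elim/big_rec2: _ => [|i U n _ IH]; first by rewrite cards0.
by apply: leq_trans (leq_card_setU _ _).1 _; rewrite leq_add2l.
Qed.

Lemma sum_subset_le (A B : {set G}) (g : G -> R) :
  A \subset B -> (forall x, x \in B -> 0 <= g x) ->
  \sum_(x in A) g x <= \sum_(x in B) g x.
Proof.
move=> AB g_ge0; rewrite [X in _ <= X](big_setID A) /= (setIidPr AB) lerDl.
by apply: sumr_ge0 => x /setDP[xB _]; apply: g_ge0.
Qed.

Lemma sum_by_fibres (D T : {set G}) (p : G -> G) (g : G -> R) :
  (forall o, o \in D -> p o \in T) ->
  \sum_(o in D) g o = \sum_(x in T) \sum_(o in [set o in D | p o == x]) g o.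
Proof.
move=> pDT; rewrite (partition_big p (mem T)) //=.
by apply: eq_bigr => x _; apply: eq_bigl => o; rewrite inE.
Qed.

End FiniteSums.

Section StarInequality.
Variables (R : archiRealFieldType) (G : finType).
Variables (A : {set G}) (Y : G -> {set G}) (x : G) (u w : G -> R).
Hypotheses (u_ge0 : forall o, o \in A -> 0 <= u o) (w_ge0 : forall b, 0 <= w b).
Hypotheses (x_in_Y : forall o, o \in A -> x \in Y o)
           (x_heaviest : forall o b, o \in A -> b \in Y o -> w b <= w x).

(* Only x can be shared, so the union weighs at most w x^2 plus one copy
   of each w b^2 <= w x * w b, b in Y o \ x. *)
Lemma sumsq_bigcup_le :
  \sum_(b in \bigcup_(o in A) Y o) w b ^+ 2
    <= w x ^+ 2 + w x * \sum_(o in A) \sum_(b in Y o :\ x) w b.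
Proof.
apply: (@le_trans _ _ (w x ^+ 2 + \sum_(o in A) \sum_(b in Y o :\ x) w b ^+ 2)).
  rewrite sum_bigcup_count.
  have -> : w x ^+ 2 = \sum_b w b ^+ 2 *+ (b == x).
    by rewrite (bigD1 x) //= eqxx big1 ?addr0 // => b /negbTE ->.
  rewrite -big_split /= big_mkcond /=; apply: ler_sum => b _.
  rewrite -mulrnDr; case: ifP => [/bigcupP[o oA bY]|_]; last first.
    by rewrite mulrn_wge0 // sqr_ge0.
  rewrite -mulr_natr ler_peMr ?sqr_ge0 // ler1n.
  have [//|bx] := eqVneq b x.
  by rewrite add0n card_gt0; apply/set0Pn; exists o; rewrite !inE oA bx.
rewrite lerD2l mulr_sumr; apply: ler_sum => o oA; rewrite mulr_sumr.
apply: ler_sum => b /setD1P[_ bY]; rewrite expr2.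
by apply: ler_wpM2r => //; apply: x_heaviest bY.
Qed.

Lemma star_inequality :
  \sum_(o in A) u o ^+ 2 <= \sum_(b in \bigcup_(o in A) Y o) w b ^+ 2 ->
  2 * \sum_(o in A) u o <= w x + \sum_(o in A) \sum_(b in Y o) w b.
Proof.
move=> /le_trans/(_ sumsq_bigcup_le) sq_le.
set P := \sum_(o in A) u o; set U2 := \sum_(o in A) u o ^+ 2.
set Q := \sum_(o in A) \sum_(b in Y o :\ x) w b in sq_le; set N : R := #|A|%:R.
rewrite -/U2 in sq_le.
have P_ge0 : 0 <= P by apply: sumr_ge0.
have U2_ge0 : 0 <= U2 by apply: sumr_ge0 => o _; apply: sqr_ge0.
have Q_ge0 : 0 <= Q by do 2!apply: sumr_ge0 => ? _.
have split_x : \sum_(o in A) \sum_(b in Y o) w b = N * w x + Q.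
  rewrite /Q /N mulr_natl -sumr_const -big_split /=; apply: eq_bigr => o oA.
  by rewrite (big_setD1 _ (x_in_Y oA)).
(* AM-GM for each o: 2 w x u o <= u o^2 + w x^2 *)
have am_gm : 2 * w x * P <= U2 + N * w x ^+ 2.
  have -> : N * w x ^+ 2 = \sum_(o in A) w x ^+ 2 by rewrite sumr_const mulr_natl.
  rewrite /P /U2 mulr_sumr -big_split /=.
  by apply: ler_sum => o _; have := sqr_ge0 (u o - w x); rewrite !expr2; nra.
rewrite split_x; have [wx0|wx_neq0] := eqVneq (w x) 0.
  suff -> : P = 0 by rewrite wx0; lra.
  have U2_0 : U2 = 0.
    by apply/eqP; rewrite eq_le U2_ge0 andbT; rewrite wx0 expr2 !mul0r addr0 in sq_le; lra.
  apply: big1 => o oA; apply/eqP; rewrite -sqrf_eq0; apply/eqP.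
  by apply: (psumr_eq0P (fun i _ => sqr_ge0 (u i)) U2_0).
have wx_gt0 : 0 < w x by rewrite lt_def wx_neq0 w_ge0.
rewrite -(ler_pM2l wx_gt0); lra.
Qed.

End StarInequality.

Definition weight_after (R : archiRealFieldType) (G : finType)
    (f : {set G} -> R) (alpha : R) (lt : rel G) (S T : {set G}) (o : G) : R :=
  rnd alpha (f (S :|: pre lt T o :|: [set o]) - f (S :|: pre lt T o)).

Section RoundedWeights.
Variables (R : archiRealFieldType) (G : finType) (f : {set G} -> R).
Variables (alpha : R) (lt : rel G).
Hypotheses (f_mono : monotone_fun f) (f_sub : submodular_fun f).
Hypotheses (alpha_gt0 : 0 < alpha) (lt_order : strict_total_order lt).

Lemma weight_ge0 (S : {set G}) b : 0 <= weight f alpha lt S b.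
Proof. exact/rnd_ge0/marginal_ge0. Qed.

Lemma weight_after_ge0 (S T : {set G}) o : 0 <= weight_after f alpha lt S T o.
Proof. exact/rnd_ge0/marginal_ge0. Qed.

Lemma sum_weight_le (S : {set G}) :
  nonneg_fun f -> \sum_(x in S) weight f alpha lt S x <= f S.
Proof.
move=> f_ge0; apply: (@le_trans _ _ (f S - f set0)); last by rewrite gerBl.
rewrite -(telescope_pre lt_order f S); apply: ler_sum => x _; exact: rnd_le.
Qed.

Lemma gain_le_weight_after (S T : {set G}) :
  f (S :|: T) - f S <= \sum_(o in T) weight_after f alpha lt S T o + #|T|%:R * alpha.
Proof.
have := telescope_pre lt_order (fun X => f (S :|: X)) T; rewrite /= setU0 => <-.
rewrite mulr_natl -sumr_const -big_split /=; apply: ler_sum => o _.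
by rewrite /weight_after setUA -lerBlDr rnd_ge.
Qed.

(* Inside a replacement (A, B) with A \subset T the element a sits on top of a
   smaller set than in the T-chain, so its replacement weight is larger. *)
Lemma weight_after_le_repl (S T A B : {set G}) a : A \subset T -> a \in A ->
  weight_after f alpha lt S T a <= weight_repl f alpha lt S A B a.
Proof.
move=> AT aA; apply/rnd_mono/marginal_antitone => //.
apply/subsetP => y; rewrite !inE => /orP[/andP[_ ->] // | /andP[yA lt_ya]].
by rewrite (subsetP AT y yA) lt_ya orbT.
Qed.

End RoundedWeights.

Section Charging.
Variables (R : archiRealFieldType) (G : finType) (f : {set G} -> R).
Variables (I : pred {set G}) (k : nat) (alpha : R) (lt : rel G) (S O : {set G}).
Hypotheses (f_mono : monotone_fun f) (f_sub : submodular_fun f) (alpha_gt0 : 0 < alpha).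
Hypotheses (k_gt0 : (0 < k)%N) (S_opt : locally_optimal k I f alpha lt S).
Variable Y : G -> {set G}.
Hypotheses (Y_sub : forall o, o \in O :\: S -> Y o \subset S :\: O)
  (Y_card : forall o, o \in O :\: S -> (#|Y o| <= k)%N)
  (Y_deg : forall x, x \in S :\: O -> (#|[set o in O :\: S | x \in Y o]| <= k)%N)
  (Y_indep : forall C : {set G}, C \subset O :\: S -> I ((S :\: \bigcup_(o in C) Y o) :|: C)).

Let w := weight f alpha lt S.
Let u := weight_after f alpha lt S (O :\: S).

(* An element of O' that displaces nothing can be added to S outright, so
   local optimality forces its rounded gain to vanish. *)
Lemma gain_unblocked o : o \in O :\: S -> Y o = set0 -> u o = 0.
Proof.
move=> oO Yo0; have /setDP[_ oS] := oO.
have repl : k_replacement k I S [set o] set0.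
  split; rewrite ?sub0set ?setD0 ?disjoints1 ?cards1 ?cards0 //.
  by have := @Y_indep [set o]; rewrite sub1set big_set1 Yo0 !setD0; apply.
have := S_opt repl; rewrite big_set1 big_set0 => sq_le0.
have : u o <= weight_repl f alpha lt S [set o] set0 o.
  by apply: weight_after_le_repl; rewrite ?set11 ?sub1set.
have u_ge0 : 0 <= u o by apply: weight_after_ge0.
by rewrite expr2 in sq_le0 => u_le; apply/eqP; rewrite eq_le u_ge0 andbT; nra.
Qed.

Let heaviest o := if [pick x in Y o | [forall b in Y o, w b <= w x]] is Some x then x else o.

Lemma heaviestP o : Y o != set0 ->
  heaviest o \in Y o /\ forall b, b \in Y o -> w b <= w (heaviest o).
Proof.
rewrite /heaviest => /set0Pn[b0 b0Y]; case: pickP => [x /andP[xY /forallP max_x]|none].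
  by split=> // b bY; have /implyP := max_x b; apply.
have [x xY max_x] := Order.TotalTheory.arg_maxP w b0Y.
have {}xY : x \in Y o := xY.
by move: (none x); rewrite xY /=; case/negP; apply/forallP => b; apply/implyP/max_x.
Qed.

Let blocked := [set o in O :\: S | Y o != set0].
Let group x := [set o in blocked | heaviest o == x].

Lemma group_sub x : group x \subset O :\: S.
Proof. by apply/subsetP => o; rewrite !inE => /andP[/andP[/andP[-> ->] _] _]. Qed.

Lemma groupP x o : o \in group x ->
  x \in Y o /\ forall b, b \in Y o -> w b <= w x.
Proof. by rewrite !inE => /andP[/andP[_ /heaviestP]] + /eqP hx; rewrite hx. Qed.

Lemma card_group x : x \in S :\: O -> (#|group x| <= k)%N.
Proof.
move=> xS; apply: leq_trans (Y_deg xS); apply/subset_leq_card/subsetP => o og.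
by rewrite inE (subsetP (group_sub x)) //; case: (groupP og).
Qed.

(* The displaced sets of a group share x, so their union has at most
   1 + k (k - 1) elements. *)
Lemma card_group_exchange x : x \in S :\: O ->
  (#|\bigcup_(o in group x) Y o| <= k ^ 2 - k + 1)%N.
Proof.
move=> xS.
have sub_x : \bigcup_(o in group x) Y o \subset x |: \bigcup_(o in group x) (Y o :\ x).
  apply/bigcupsP => o og; apply/subsetP => b bY; rewrite in_setU1.
  by have [//|bx] /= := eqVneq b x; apply/bigcupP; exists o; rewrite // !inE bx.
have card_Yx o : o \in group x -> (#|Y o :\ x| <= k.-1)%N.
  move=> og; have [xY _] := groupP og.
  by have := Y_card (subsetP (group_sub x) o og); rewrite (cardsD1 x) xY; lia.
apply: leq_trans (subset_leq_card sub_x) _; rewrite cardsU1.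
apply: leq_trans (leq_add (leq_b1 _) (card_bigcup_le _ _)) _.
have : (\sum_(o in group x) #|Y o :\ x| <= \sum_(o in group x) k.-1)%N.
  exact: leq_sum card_Yx.
rewrite sum_nat_const; have := card_group xS; nia.
Qed.

Lemma group_replacement x : x \in S :\: O ->
  k_replacement k I S (group x) (\bigcup_(o in group x) Y o).
Proof.
move=> xS; split.
- apply/bigcupsP => o og; apply: subset_trans (subsetDl S O).
  exact/Y_sub/(subsetP (group_sub x)).
- rewrite disjoint_subset; apply/subsetP => o /(subsetP (group_sub x)).
  by rewrite !inE => /andP[oS _]; rewrite (negbTE oS) andbF.
- exact: card_group.
- exact: card_group_exchange.
- exact: Y_indep (group_sub x).
Qed.

(* Local optimality on a group plus the star inequality. *)
Lemma group_bound x : x \in S :\: O ->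
  2 * \sum_(o in group x) u o <= w x + \sum_(o in group x) \sum_(b in Y o) w b.
Proof.
move=> xS; apply: star_inequality.
- by move=> o _; apply: weight_after_ge0.
- by move=> b; apply: weight_ge0.
- by move=> o /groupP[].
- by move=> o b /groupP[_]; apply.
apply: le_trans (S_opt (group_replacement xS)); apply: ler_sum => o og.
have u_ge0 : 0 <= u o by apply: weight_after_ge0.
have : u o <= weight_repl f alpha lt S (group x) (\bigcup_(o in group x) Y o) o.
  exact: weight_after_le_repl (group_sub x) og.
by rewrite !expr2; nra.
Qed.

(* Each x in S' lies in at most k displaced sets (K2). *)
Lemma sum_exchange_le :
  \sum_(o in O :\: S) \sum_(b in Y o) w b <= k%:R * \sum_(x in S :\: O) w x.
Proof.
rewrite sum_bigcup_count mulr_sumr [X in _ <= X]big_mkcond /=.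
apply: ler_sum => b _; case: ifP => bS.
  by rewrite mulr_natl ler_wpMn2l ?Y_deg //; apply: weight_ge0.
suff -> : [set o in O :\: S | b \in Y o] = set0 by rewrite cards0.
apply/setP => o; rewrite inE in_set0; apply/negbTE/andP => -[oO bY].
by move: bS; rewrite (subsetP (Y_sub oO) b bY).
Qed.

(* Summing group_bound over the groups: elements displacing nothing have no
   gain, and the total weight of the Y o is charged k times to S'. *)
Theorem charging :
  2 * \sum_(o in O :\: S) u o <= (k%:R + 1) * \sum_(x in S :\: O) w x.
Proof.
have heaviest_S' o : o \in blocked -> heaviest o \in S :\: O.
  by rewrite inE => /andP[oO /heaviestP[hY _]]; apply: (subsetP (Y_sub oO)).
have blocked_sub : blocked \subset O :\: S by apply/subsetP => o; rewrite inE => /andP[].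
have -> : \sum_(o in O :\: S) u o = \sum_(o in blocked) u o.
  rewrite (big_setID blocked) /= (setIidPr blocked_sub) [X in _ + X]big1 ?addr0 //.
  move=> o /setDP[oO]; rewrite inE oO /= negbK => /eqP.
  exact: gain_unblocked.
rewrite (sum_by_fibres u heaviest_S') mulr_sumr.
apply: le_trans (ler_sum _ (fun x xS => group_bound xS)) _.
rewrite big_split /= -(sum_by_fibres (fun o => \sum_(b in Y o) w b) heaviest_S').
rewrite mulrDl mul1r addrC lerD2r; apply: le_trans sum_exchange_le.
apply: sum_subset_le => // o _.
by apply/sumr_ge0 => b _; apply: weight_ge0.
Qed.

End Charging.

Lemma absorb_slack (R : realFieldType) (c eps delta a b : R) :
  0 < c -> 0 < eps -> delta = (1 + c / (2 * eps))^-1 ->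
  a <= c / 2 * b + delta * a -> a <= (c / 2 + eps) * b.
Proof.
move=> c_gt0 eps_gt0 def_d slack.
have d_eq : delta * (2 * eps + c) = 2 * eps.
  by rewrite def_d; field; rewrite ?mulf_neq0 ?paddr_eq0; lra.
have : c * a <= c * ((c / 2 + eps) * b).
  have := congr1 ( *%R^~ a) d_eq.
  suff : (2 * eps + c) * a <= (2 * eps + c) * (c / 2 * b + delta * a) by move=> /= ? ?; lra.
  by rewrite ler_pM2l //; lra.
by rewrite ler_pM2l.
Qed.

Unset Implicit Arguments.

Theorem mainTheorem4 (R : archiRealFieldType) (G : finType)
  (f : {set G} -> R) (I : pred {set G}) (k : nat) (lt : rel G)
  (eps delta alpha : R) (estar : G) (S O : {set G}) :
  nonneg_fun f -> monotone_fun f -> submodular_fun f ->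
  (exists X, I X) -> down_closed I -> (1 <= k)%N -> k_exchange k I ->
  (forall e : G, I [set e]) ->
  strict_total_order lt ->
  0 < eps -> eps < 1 ->
  delta = (1 + (k%:R + 3) / (2 * eps))^-1 ->
  (forall e : G, f [set e] <= f [set estar]) ->
  0 < f [set estar] ->
  alpha = f [set estar] * delta / #|G|%:R ->
  I S -> locally_optimal k I f alpha lt S ->
  I O -> (forall X, I X -> f X <= f O) ->
  ((k%:R + 3) / 2 + eps) * f S >= f O.
Proof.
move=> f_ge0 f_mono f_sub _ _ k_gt0 k_exch I_single lt_order eps_gt0 _ def_delta _
  fe_gt0 def_alpha IS S_opt IO O_max.
have k_ge0 : 0 <= k%:R :> R by [].
have delta_gt0 : 0 < delta.
  by rewrite def_delta invr_gt0 ltr_wpDr ?divr_ge0 //; lra.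
have n_gt0 : (0 < #|G|)%N by apply/card_gt0P; exists estar.
have alpha_gt0 : 0 < alpha by rewrite def_alpha !divr_gt0 ?mulr_gt0 ?ltr0n.
have [Y [Y_sub Y_card Y_deg Y_indep]] := k_exch O S IO IS.
(* f O <= f (S u O') <= f S + sum_{O'} u + |O'| alpha *)
have O_le : f O <= f (S :|: (O :\: S)).
  by apply/f_mono/subsetP => y yO; rewrite !inE yO andbT orbN.
have gain := gain_le_weight_after f alpha_gt0 lt_order S (O :\: S).
(* the rounding loss |O'| alpha is at most n alpha = delta f {e*} <= delta f O *)
have loss : #|O :\: S|%:R * alpha <= delta * f O.
  apply: (@le_trans _ _ (#|G|%:R * alpha)).
    by apply: ler_wpM2r; [exact: ltW alpha_gt0 | rewrite ler_nat max_card].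
  rewrite def_alpha mulrC divfK ?pnatr_eq0 -?lt0n // mulrC.
  by apply: ler_wpM2l; [exact: ltW delta_gt0 | exact: O_max (I_single estar)].
(* charging: 2 sum_{O'} u <= (k+1) sum_{S'} w <= (k+1) f S *)
have charge := charging f_mono f_sub alpha_gt0 k_gt0 S_opt Y_sub Y_card Y_deg Y_indep.
have w_le : (k%:R + 1) * \sum_(x in S :\: O) weight f alpha lt S x <= (k%:R + 1) * f S.
  apply: ler_wpM2l; first lra.
  apply: le_trans (sum_weight_le alpha_gt0 lt_order S f_ge0).
  by apply: sum_subset_le (subsetDl S O) _ => x _; apply: weight_ge0.
apply: (absorb_slack _ eps_gt0 def_delta); lra.
Qed.
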